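(* For every positive integer $N$ and every admissible index $\boldsymbol{k}=(k_1,\dots,k_r)$, \[ \zeta^\diamondsuit_N(\boldsymbol{k})=\sum_{\substack{0<n_{i,1}\le\cdots\le n_{i,k_i}<N\ (i\in[r])\\ n_{i,k_i}\le n_{i+1,1}\ (i\in[r]^1_{\boldsymbol{k}})\\ n_{i,k_i}<n_{i+1,1}\ (i\in[r-1]\setminus[r]^1_{\boldsymbol{k}})}}\ \prod_{i\in[r]}\frac1{(N-n_{i,1})\,n_{i,2}\cdots n_{i,k_i}}. \]
   Context: $[n]=\{1,\dots,n\}$. An admissible index is a nonempty tuple of positive integers with last entry $\ge2$. For admissible $\boldsymbol{k}=(k_1,\dots,k_r)$: $[r]^1_{\boldsymbol{k}}=\{i\in[r]:k_i=1\}$ (note $r\notin[r]^1_{\boldsymbol{k}}$), $S_{r,N}(A)=\{(n_1,\dots,n_r)\in[N-1]^r: n_i\le n_{i+1}\ (i\in A),\ n_i<n_{i+1}\ (i\in[r-1]\setminus A)\}$, and $\zeta^\diamondsuit_N(\boldsymbol{k})=\sum_{A\subset[r]^1_{\boldsymbol{k}}}\sum_{(n_1,\dots,n_r)\in S_{r,N}(A)}\prod_{i\in A}(N-n_i)^{-1}\prod_{i\in[r]\setminus A}n_i^{-k_i}$. Empty products equal $1$. *)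

(* values in rat. Indices are 0-based internally:
   paper's i in [r] is i : 'I_r (paper index i+1), paper's n_{i,j} (j in [k_i])
   is nget n i j with j < k_i (paper index j+1). *)
From HB Require Import structures.
From mathcomp Require Import all_boot all_order all_algebra.
Set Implicit Arguments. Unset Strict Implicit. Unset Printing Implicit Defensive.
Import Order.TTheory GRing.Theory Num.Theory.
Local Open Scope ring_scope.

Definition admissible (k : seq nat) : bool :=
  [&& k != [::], all (fun x => 0 < x)%N k & (2 <= last 0 k)%N].

Definition kk (k : seq nat) (i : nat) : nat := nth 0%N k i.

Definition ones (k : seq nat) : {set 'I_(size k)} :=
  [set i : 'I_(size k) | kk k i == 1%N].

Definition inS (k : seq nat) (N : nat) (A : {set 'I_(size k)})
    (n : {ffun 'I_(size k) -> 'I_N}) : bool :=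
  [forall i, (0 < n i)%N] &&
  [forall i : 'I_(size k), forall j : 'I_(size k),
     (val j == (val i).+1) ==>
       (if i \in A then (n i <= n j)%N else (n i < n j)%N)].

Definition zeta_diamond (k : seq nat) (N : nat) : rat :=
  \sum_(A : {set 'I_(size k)} | A \subset ones k)
    \sum_(n : {ffun 'I_(size k) -> 'I_N} | inS A n)
      ((\prod_(i in A) ((N - n i)%:R)^-1) *
       (\prod_(i in ~: A) (((n i)%:R) ^+ kk k i)^-1)).

Definition dind (k : seq nat) := {i : 'I_(size k) & 'I_(kk k i)}.

Definition dvars (k : seq nat) (N : nat) := {ffun dind k -> 'I_N}.

(* value n_{i,j} (0 if j is out of range, never used then) *)
Definition nget (k : seq nat) (N : nat) (n : dvars k N) (i : 'I_(size k))
    (j : nat) : nat :=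
  match (insub j : option 'I_(kk k i)) with
  | Some j' => val (n (@Tagged 'I_(size k) i (fun i0 : 'I_(size k) => 'I_(kk k i0)) j'))
  | None => 0%N
  end.

Definition rhs_range (k : seq nat) (N : nat) (n : dvars k N) : bool :=
  [forall i : 'I_(size k),
     (0 < nget n i 0)%N &&
     [forall j : 'I_(kk k i), ((val j).+1 < kk k i)%N ==>
        (nget n i j <= nget n i (val j).+1)%N]] &&
  [forall i : 'I_(size k), forall i' : 'I_(size k),
     (val i' == (val i).+1) ==>
       (if i \in ones k then (nget n i (kk k i).-1 <= nget n i' 0)%N
        else (nget n i (kk k i).-1 < nget n i' 0)%N)].

Definition rhs_sum (k : seq nat) (N : nat) : rat :=
  \sum_(n : dvars k N | rhs_range n)
    \prod_(i : 'I_(size k))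
      (((N - nget n i 0)%:R *
        \prod_(1 <= j < kk k i) (nget n i j)%:R)^-1).

From mathcomp Require Import all_boot all_order all_algebra.
From mathcomp Require Import ring.

(* Peel off the index one entry at a time.  For a suffix k of the index and a
   lower bound t on its first summation variable, let L_k(t) and R_k(t) be the
   corresponding partial sums of the two sides ([lhs_tail], [rhs_tail]); both
   satisfy explicit recursions in the first entry of k.  With N = M + 1 and the
   connector c(m, n) = C(m, n) / C(M, n), induction on k gives, for 1 <= t <= N,
     L_k(t) = sum_s (c(s-1, t-1) - c(s-2, t-1)) R_k(s)    (c(-1, n) := 0),
   and at t = 1 this kernel is the Kronecker delta at s = 1, so L_k(1) = R_k(1).
   The inductive step rests on the binomial identities
     sum_(1 <= b <= m) c(b, n) / b = c(m, n) / n,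
     sum_(p <= j < M) c(m, j) / (M - j) = c(m, p) / (M - m)   (m < M),
     (c(m+1, j+1) - c(m, j+1)) / (j+1) = c(m, j) / (M - j). *)

Set Implicit Arguments. Unset Strict Implicit. Unset Printing Implicit Defensive.
Import GRing.Theory Num.Theory.
Local Open Scope ring_scope.

Section FinFunSums.
Variables (T : finType) (R : nmodType).

Definition fcons r (x : T) (h : {ffun 'I_r -> T}) : {ffun 'I_r.+1 -> T} :=
  [ffun i => if unlift ord0 i is Some j then h j else x].

Lemma fcons0 r x (h : {ffun 'I_r -> T}) : fcons x h ord0 = x.
Proof. by rewrite ffunE unlift_none. Qed.

Lemma fconsS r x (h : {ffun 'I_r -> T}) j : fcons x h (lift ord0 j) = h j.
Proof. by rewrite ffunE liftK. Qed.

Lemma sum_ffun_fcons r (P : pred {ffun 'I_r.+1 -> T}) (F : {ffun 'I_r.+1 -> T} -> R) :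
  \sum_(g | P g) F g = \sum_(x : T) \sum_(h : {ffun 'I_r -> T} | P (fcons x h)) F (fcons x h).
Proof.
rewrite pair_big_dep /=.
rewrite (reindex (fun p : T * {ffun 'I_r -> T} => fcons p.1 p.2)) /=.
  by apply: eq_bigl => p.
exists (fun g : {ffun 'I_r.+1 -> T} => (g ord0, [ffun j => g (lift ord0 j)])).
  move=> [x h] _ /=; rewrite fcons0; congr (_, _).
  by apply/ffunP => j; rewrite ffunE fconsS.
move=> g _; apply/ffunP => i; rewrite ffunE.
by case: (unliftP ord0 i) => [j ->|->]; rewrite ?liftK ?unlift_none // ffunE.
Qed.

Variables (A B D : finType) (phi : A + B -> D) (psi : D -> A + B).
Hypotheses (phiK : cancel phi psi) (psiK : cancel psi phi).

Definition glue (a : {ffun A -> T}) (b : {ffun B -> T}) : {ffun D -> T} :=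
  [ffun d => match psi d with inl x => a x | inr y => b y end].

Lemma glueL a b x : glue a b (phi (inl x)) = a x.
Proof. by rewrite ffunE phiK. Qed.

Lemma glueR a b y : glue a b (phi (inr y)) = b y.
Proof. by rewrite ffunE phiK. Qed.

Lemma sum_ffun_glue (P : pred {ffun D -> T}) (F : {ffun D -> T} -> R) :
  \sum_(f | P f) F f =
  \sum_(a : {ffun A -> T}) \sum_(b : {ffun B -> T} | P (glue a b)) F (glue a b).
Proof.
rewrite pair_big_dep /=.
rewrite (reindex (fun p : {ffun A -> T} * {ffun B -> T} => glue p.1 p.2)) /=.
  by apply: eq_bigl => p.
exists (fun f : {ffun D -> T} => ([ffun x => f (phi (inl x))], [ffun y => f (phi (inr y))])).
  move=> [a b] _ /=; congr (_, _); apply/ffunP => x; by rewrite ffunE ?glueL ?glueR.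
move=> f _; apply/ffunP => d; rewrite ffunE.
by case e: (psi d) => [x|y]; rewrite ffunE -e psiK.
Qed.
End FinFunSums.

Lemma forall_ord_recl r (P : pred 'I_r.+1) :
  [forall i, P i] = P ord0 && [forall i : 'I_r, P (lift ord0 i)].
Proof.
apply/forallP/andP => [H|[H0 /forallP H] i]; first by split => //; apply/forallP.
by case: (unliftP ord0 i) => [j ->|->].
Qed.

Section NatCasts.
Variable F : numFieldType.

Lemma natr_subn_neq0 m n : (n < m)%N -> (m - n)%:R != 0 :> F.
Proof. by move=> lt_nm; rewrite pnatr_eq0 subn_eq0 -ltnNge. Qed.

Lemma natr_binSr m n : 'C(m, n.+1)%:R = (m - n)%:R * 'C(m, n)%:R / n.+1%:R :> F.
Proof. by rewrite -natrM -mul_bin_left natrM mulrAC divff ?mul1r // pnatr_eq0. Qed.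

Lemma natr_bin_predl m n :
  'C(m, n.+1)%:R = 'C(m.+1, n.+1)%:R - n.+1%:R * 'C(m.+1, n.+1)%:R / m.+1%:R :> F.
Proof.
by rewrite -natrM -mul_bin_diag natrM mulrAC divff ?mul1r ?pnatr_eq0 // binS natrD addrK.
Qed.
End NatCasts.
Arguments natr_binSr {F}.
Arguments natr_bin_predl {F}.

Section Connector.
Variable M : nat.
Local Notation N := M.+1.

Definition conn (m n : nat) : rat := 'C(m, n)%:R / 'C(M, n)%:R.

Lemma binM_neq0 n : (n <= M)%N -> 'C(M, n)%:R != 0 :> rat.
Proof. by move=> le_nM; rewrite pnatr_eq0 -lt0n bin_gt0. Qed.

Lemma conn_small m n : (m < n)%N -> conn m n = 0.
Proof. by move=> lt_mn; rewrite /conn bin_small // mul0r. Qed.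

Lemma conn_recr m n : (n < M)%N -> conn m n.+1 * (M - n)%:R = conn m n * (m - n)%:R.
Proof.
move=> lt_nM; have nzC := binM_neq0 (ltnW lt_nM); have nzMn := natr_subn_neq0 rat lt_nM.
by rewrite /conn !natr_binSr; field; rewrite nzC nzMn nat1r pnatr_eq0.
Qed.

Lemma conn_diffS m j : (j < M)%N ->
  (conn m.+1 j.+1 - conn m j.+1) / j.+1%:R = conn m j / (M - j)%:R.
Proof.
move=> lt_jM; have nzC := binM_neq0 (ltnW lt_jM); have nzMj := natr_subn_neq0 rat lt_jM.
by rewrite /conn binS natrD (natr_binSr M); field; rewrite nzC nzMj nat1r pnatr_eq0.
Qed.

Lemma conn_diffSS m j : conn m.+1 j.+1 - conn m j.+1 = j.+1%:R * conn m.+1 j.+1 / m.+1%:R.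
Proof.
rewrite /conn (natr_bin_predl m).
have [le_jM | lt_Mj] := leqP j.+1 M; last by rewrite (bin_small lt_Mj) invr0 !mulr0 mul0r subrr.
by have nzC := binM_neq0 le_jM; field; rewrite nzC !nat1r !pnatr_eq0.
Qed.

Lemma sum_conn_div_left m n : (0 < n)%N ->
  \sum_(1 <= b < m.+1) conn b n / b%:R = conn m n / n%:R.
Proof.
case: n => // j _; elim: m => [|m IH]; first by rewrite big_geq // conn_small // mul0r.
rewrite big_nat_recr //= IH /conn (natr_bin_predl m).
have [le_jM | lt_Mj] := leqP j.+1 M; last by rewrite (bin_small lt_Mj) invr0 !mulr0 !mul0r addr0.
by have nzC := binM_neq0 le_jM; field; rewrite nzC !nat1r !pnatr_eq0.
Qed.

Lemma sum_conn_div_compl m p : (m < M)%N ->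
  \sum_(p <= j < M) conn m j / (M - j)%:R = conn m p / (M - m)%:R.
Proof.
move=> lt_mM; move Ed: (M - p)%N => d; elim: d p Ed => [|d IH] p Ed.
  have le_Mp : (M <= p)%N by rewrite -subn_eq0 Ed.
  by rewrite big_geq // conn_small ?mul0r // (leq_trans lt_mM).
have lt_pM : (p < M)%N by rewrite -subn_gt0 Ed.
rewrite big_ltn // IH; last by rewrite subnS Ed.
have nzMp := natr_subn_neq0 rat lt_pM; have nzMm := natr_subn_neq0 rat lt_mM.
have -> : conn m p.+1 = conn m p * (m - p)%:R / (M - p)%:R.
  by rewrite -conn_recr //; field.
have [le_pm | lt_mp] := leqP p m; last by rewrite conn_small // !mul0r add0r.
have eMp : (M - p)%:R = (M - m)%:R + (m - p)%:R :> rat.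
  by rewrite -natrD addnBA // subnK // ltnW.
by move: nzMp; rewrite eMp => nzMp; field; rewrite nzMp nzMm.
Qed.

Lemma sum_conn_compl_swap m p : (m <= M)%N ->
  \sum_(1 <= a < m.+1) conn a.-1 p / (N - a)%:R =
  \sum_(p.+1 <= n < N) conn m n / n%:R.
Proof.
elim: m => [|m IH] le_mM.
  rewrite big_geq // big_nat big1 // => n /andP[lt_pn _].
  by rewrite conn_small ?mul0r // (leq_trans _ lt_pn).
rewrite big_nat_recr //= IH ?(ltnW le_mM) // subSS.
have -> : \sum_(p.+1 <= n < N) conn m.+1 n / n%:R =
   \sum_(p.+1 <= n < N) conn m n / n%:R +
   \sum_(p.+1 <= n < N) (conn m.+1 n - conn m n) / n%:R.
  by rewrite -big_split /=; apply: eq_bigr => n _; rewrite -mulrDl addrC subrK.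
congr (_ + _); rewrite big_add1 /= -sum_conn_div_compl //.
by apply: eq_big_nat => j /andP[_ lt_jM]; rewrite conn_diffS.
Qed.

Definition connp (s t : nat) : rat := if s is s'.+1 then conn s' t.-1 else 0.
Definition conn_step (s t : nat) : rat := connp s t - connp s.-1 t.

Lemma connpE a t : (0 < a)%N -> connp a t = conn a.-1 t.-1.
Proof. by case: a. Qed.

Lemma sum_conn_step a t : \sum_(s < a.+1) conn_step s t = connp a t.
Proof.
elim: a => [|a IH]; first by rewrite big_ord1 /conn_step /= subrr.
by rewrite big_ord_recr /= IH /conn_step /= addrC subrK.
Qed.

Lemma connp_div_compl_split s t : (0 < s)%N -> (s <= M)%N -> (0 < t)%N ->
  connp s t / (N - s)%:R =
  \sum_(t <= n < N) conn_step s n.+1 / n%:R +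
  \sum_(t <= n < N) conn_step s n / (N - n)%:R.
Proof.
case: s => // s _ le_sM; case: t => // p _.
rewrite !big_add1 /= -big_split /= subSS /= -sum_conn_div_compl //.
apply: eq_big_nat => j /andP[_ lt_jM]; have nzMj := natr_subn_neq0 rat lt_jM.
rewrite subSS /conn_step /=; case: s le_sM => [|s] _ /=.
  by rewrite (@conn_small 0 j.+1) // !subr0 mul0r add0r.
by rewrite conn_diffS //; field.
Qed.

Definition Ysum (G : nat -> rat) (t : nat) : rat :=
  \sum_(a < N | (0 < a)%N && (t <= a)%N) G a / (N - a)%:R.
Definition Xsum (G : nat -> rat) (t : nat) : rat :=
  \sum_(b < N | (0 < b)%N && (t <= b)%N) G b / b%:R.
Fixpoint Xiter (m : nat) (G : nat -> rat) : nat -> rat :=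
  if m is m'.+1 then Xsum (Xiter m' G) else G.
Definition transport (R : nat -> rat) (t : nat) : rat :=
  \sum_(s < N.+1) conn_step s t * R s.
Definition conn_avg (n : nat) (H : nat -> rat) : rat :=
  \sum_(b < N | (0 < b)%N) conn b n * H b / b%:R.

Lemma transport_Ysum G t : transport (Ysum G) t =
  \sum_(a < N | (0 < a)%N) connp a t * G a / (N - a)%:R.
Proof.
rewrite /transport /Ysum; under eq_bigr do rewrite big_distrr.
rewrite (exchange_big_dep (fun a : 'I_N => (0 < a)%N)) /=; last by move=> s a _ /andP[].
apply: eq_bigr => a a_gt0; rewrite -big_distrl /= mulrA; congr (_ * _ * _).
rewrite -(sum_conn_step a t) (big_ord_widen N.+1 (fun s => conn_step s t)); last by rewrite ltnS ltnW.
by apply: eq_bigl => s; rewrite a_gt0.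
Qed.

Lemma sum_connp_div_compl b t : (b < N)%N -> (0 < t)%N ->
  \sum_(a < N | (0 < a)%N && (a <= b)%N) connp a t / (N - a)%:R =
  \sum_(n < N | (t <= n)%N) conn b n / n%:R.
Proof.
move=> lt_bN t_gt0; have := sum_conn_compl_swap t.-1 lt_bN.
rewrite prednK // !big_geq_mkord.
rewrite (big_ord_widen_cond N _ (fun a => conn a.-1 t.-1 / (N - a)%:R) lt_bN) => <-.
by apply: eq_big => // a /andP[a_gt0 _]; rewrite connpE.
Qed.

Lemma sum_connp_Xsum H t : (0 < t)%N ->
  \sum_(a < N | (0 < a)%N) connp a t * Xsum H a / (N - a)%:R =
  \sum_(n < N | (t <= n)%N) conn_avg n H / n%:R.
Proof.
move=> t_gt0; rewrite /Xsum; under eq_bigr do rewrite mulrAC big_distrr.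
rewrite (exchange_big_dep (fun b : 'I_N => (0 < b)%N)) /=; last by move=> a b _ /andP[].
under eq_bigr => b b_gt0.
  rewrite -big_distrl /= (eq_bigl (fun a : 'I_N => (0 < a)%N && (a <= b)%N)).
    by rewrite sum_connp_div_compl // big_distrl /=; over.
  by move=> a; rewrite b_gt0.
rewrite (exchange_big_dep (fun n : 'I_N => (t <= n)%N)) //=.
apply: eq_bigr => n le_tn; rewrite /conn_avg big_distrl /=.
apply: eq_big => [b|b _]; first by rewrite le_tn andbT.
by rewrite !mulrA; ring.
Qed.

Lemma conn_avg_Xsum n H : (0 < n)%N -> conn_avg n (Xsum H) = conn_avg n H / n%:R.
Proof.
move=> n_gt0; rewrite /conn_avg /Xsum; under eq_bigr do rewrite mulrAC big_distrr.
rewrite (exchange_big_dep (fun b : 'I_N => (0 < b)%N)) /=; last by move=> a b _ /andP[].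
rewrite big_distrl /=; apply: eq_bigr => b b_gt0; rewrite -big_distrl /=.
have := sum_conn_div_left b n_gt0.
rewrite big_geq_mkord (big_ord_widen_cond N _ (fun a => conn a n / a%:R) (ltn_ord b)).
rewrite (eq_bigl (fun a : 'I_N => (0 < a)%N && (a <= b)%N)) => [->|a]; first by ring.
by rewrite b_gt0.
Qed.

Lemma conn_avg_Xiter n m H : (0 < n)%N -> conn_avg n (Xiter m H) = conn_avg n H / n%:R ^+ m.
Proof.
move=> n_gt0; elim: m => [|m IH] /=; first by rewrite expr0 invr1 mulr1.
by rewrite conn_avg_Xsum // IH exprS invfM mulrAC mulrA.
Qed.

Lemma conn_avg_shift j R : j.+1%:R * conn_avg j.+1 (fun v => R v.+1) = transport R j.+2.
Proof.
rewrite /transport big_ord_recl /conn_step /= subrr mul0r add0r.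
rewrite /conn_avg big_distrr big_mkcond /=.
apply: eq_bigr => -[[|b] lt_bN] _ /=; rewrite /bump /= ?add0n.
  by rewrite conn_small // subr0 mul0r.
by rewrite conn_diffSS; ring.
Qed.

Lemma transport1 t : (0 < t)%N -> (t <= N)%N -> transport (fun _ => 1) t = 1.
Proof.
move=> t_gt0 le_tN; rewrite /transport; under eq_bigr do rewrite mulr1.
by rewrite sum_conn_step /= /conn divff // binM_neq0 // -ltnS prednK.
Qed.

Lemma transport_at1 R : transport R 1 = R 1%N.
Proof.
rewrite /transport !big_ord_recl /conn_step /= subrr mul0r add0r.
rewrite /conn !bin0 divff ?oner_eq0 // subr0 mul1r big1 ?addr0 //.
by move=> i _; rewrite /bump /= !bin0 subrr mul0r.
Qed.

Lemma transport_Ysum_split R t : (0 < t)%N -> R N = 0 ->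
  \sum_(n < N | (0 < n)%N && (t <= n)%N)
     (n%:R^-1 * transport R n.+1 + (N - n)%:R^-1 * transport R n) =
  transport (Ysum R) t.
Proof.
move=> t_gt0 RN0; rewrite transport_Ysum /transport.
under eq_bigr do rewrite !big_distrr -big_split /=.
rewrite exchange_big /= big_ord_recr /= [X in _ + X]big1 ?addr0; last first.
  by move=> n _; rewrite RN0 !mulr0 addr0.
rewrite [RHS]big_mkcond /=; apply: eq_bigr => -[[|s] lt_sN] _ /=.
  by rewrite big1 // => n _; rewrite /conn_step /= !subrr !mul0r !mulr0 addr0.
rewrite -[conn s t.-1]/(connp s.+1 t) mulrAC connp_div_compl_split //.
rewrite !big_geq_mkord mulrDl !big_distrl /= -big_split /=.
apply: eq_big => [n|n _]; last by ring.
by apply/idP/idP => [/andP[]//|le_tn]; rewrite le_tn (leq_trans t_gt0 le_tn).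
Qed.

Lemma transport_Ysum_Xiter R j t : (0 < t)%N ->
  transport (Ysum (Xiter j.+1 (fun v => R v.+1))) t =
  \sum_(n < N | (0 < n)%N && (t <= n)%N) (n%:R ^+ j.+2)^-1 * transport R n.+1.
Proof.
move=> t_gt0; rewrite transport_Ysum sum_connp_Xsum //.
apply: eq_big => [n|[[|n] lt_nN] /= le_tn].
- by apply/idP/idP => [le_tn|/andP[]//]; rewrite le_tn (leq_trans t_gt0 le_tn).
- by have := leq_trans t_gt0 le_tn.
rewrite conn_avg_Xiter // -conn_avg_shift !exprS.
by field; rewrite expf_neq0 ?nat1r pnatr_eq0.
Qed.

(* Sums over the variables of the suffix k whose first variable is >= t; in
   [lhs_tail] the [k0 == 1] summand is the case where the first position lies in
   A, and in [rhs_tail] the next block may start at the same value exactly when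
   k0 = 1. *)
Fixpoint lhs_tail (k : seq nat) (t : nat) : rat :=
  if k is k0 :: k' then
    \sum_(n < N | (0 < n)%N && (t <= n)%N)
      ((n%:R ^+ k0)^-1 * lhs_tail k' n.+1 +
       (if k0 == 1%N then (N - n)%:R^-1 * lhs_tail k' n else 0))
  else 1.

Fixpoint rhs_tail (k : seq nat) (t : nat) : rat :=
  if k is k0 :: k' then
    Ysum (Xiter k0.-1 (fun v => rhs_tail k' (if k0 == 1%N then v else v.+1))) t
  else 1.

Fixpoint tail_admissible (k : seq nat) : bool :=
  if k is k0 :: k' then [&& (0 < k0)%N, tail_admissible k' & (k0 != 1%N) || (k' != [::])]
  else true.

Lemma tail_admissibleE k : tail_admissible k = all (fun x => 0 < x)%N k && (last 2 k != 1%N).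
Proof.
elim: k => // k0 k' IH; case: k' IH => [|k1 k''] IH; first by rewrite /= orbF andbT.
by move: IH => /= ->; rewrite orbT andbT andbA.
Qed.

Lemma rhs_tail_top k : k != [::] -> rhs_tail k N = 0.
Proof.
case: k => // k0 k' _ /=; rewrite /Ysum big_pred0 // => a.
by rewrite [(N <= _)%N]leqNgt ltn_ord andbF.
Qed.

Lemma lhs_tail_transport k t : tail_admissible k -> (0 < t)%N -> (t <= N)%N ->
  lhs_tail k t = transport (rhs_tail k) t.
Proof.
elim: k t => [|k0 k' IH] t /=; first by move=> _ t_gt0 le_tN; rewrite transport1.
case/and3P=> k0_gt0 adm_k' k0_k' t_gt0 le_tN.
case: k0 k0_gt0 k0_k' => // -[|j] _ /= k0_k'.
  (* a trailing 1 is excluded, so k' is nonempty and [rhs_tail k'] vanishes at N *)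
  rewrite -transport_Ysum_split ?rhs_tail_top //.
  apply: eq_bigr => n /andP[n_gt0 _]; rewrite expr1 !IH // ltnW //.
rewrite transport_Ysum_Xiter //.
by apply: eq_bigr => n /andP[n_gt0 _]; rewrite addr0 IH.
Qed.

Lemma lhs_tail_rhs_tail k : tail_admissible k -> lhs_tail k 1 = rhs_tail k 1.
Proof. by move=> adm_k; rewrite lhs_tail_transport // transport_at1. Qed.

End Connector.

Section LeftSide.
Variable M : nat.
Local Notation N := M.+1.

(* The flag (g i).1 records whether i belongs to the set A of [zeta_diamond]. *)
Definition lhs_range (k : seq nat) (t : nat) (g : {ffun 'I_(size k) -> bool * 'I_N}) : bool :=
  [&& [forall i, (g i).1 ==> (kk k i == 1%N)],
      [forall i, (0 < (g i).2)%N],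
      [forall i : 'I_(size k), forall j : 'I_(size k), (val j == (val i).+1) ==>
         (if (g i).1 then ((g i).2 <= (g j).2)%N else ((g i).2 < (g j).2)%N)] &
      [forall i : 'I_(size k), (val i == 0%N) ==> (t <= (g i).2)%N]].

Definition lhs_weight (k : seq nat) (g : {ffun 'I_(size k) -> bool * 'I_N}) : rat :=
  \prod_(i : 'I_(size k))
    (if (g i).1 then ((N - (g i).2)%:R)^-1 else (((g i).2)%:R ^+ kk k i)^-1).

Arguments lhs_range : clear implicits.
Arguments lhs_weight : clear implicits.

Lemma lhs_range_fcons k0 k' t x (h : {ffun 'I_(size k') -> bool * 'I_N}) :
  lhs_range (k0 :: k') t (fcons x h) =
  [&& x.1 ==> (k0 == 1%N), (0 < x.2)%N, (t <= x.2)%N &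
      lhs_range k' (if x.1 then val x.2 else (val x.2).+1) h].
Proof.
rewrite /lhs_range !forall_ord_recl fcons0.
have flags_tail : [forall i, (fcons x h (lift ord0 i)).1 ==> (kk (k0 :: k') (lift ord0 i) == 1%N)]
   = [forall i, (h i).1 ==> (kk k' i == 1%N)] by apply: eq_forallb => i; rewrite fconsS.
have pos_tail : [forall i, (0 < (fcons x h (lift ord0 i)).2)%N] = [forall i, (0 < (h i).2)%N].
  by apply: eq_forallb => i; rewrite fconsS.
have link_head : [forall i : 'I_(size k'), (val (lift ord0 i) == (val (@ord0 (size k'))).+1) ==>
         (if x.1 then (x.2 <= (fcons x h (lift ord0 i)).2)%N
          else (x.2 < (fcons x h (lift ord0 i)).2)%N)] =
   [forall i : 'I_(size k'), (val i == 0%N) ==>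
         ((if x.1 then val x.2 else (val x.2).+1) <= (h i).2)%N].
  by apply: eq_forallb => i; rewrite fconsS /=; case: (x.1).
have links_tail : [forall i : 'I_(size k'), forall j : 'I_(size k').+1,
     (val j == (val (lift ord0 i)).+1) ==>
     (if (fcons x h (lift ord0 i)).1
      then ((fcons x h (lift ord0 i)).2 <= (fcons x h j).2)%N
      else ((fcons x h (lift ord0 i)).2 < (fcons x h j).2)%N)] =
   [forall i : 'I_(size k'), forall j : 'I_(size k'), (val j == (val i).+1) ==>
         (if (h i).1 then ((h i).2 <= (h j).2)%N else ((h i).2 < (h j).2)%N)].
  apply: eq_forallb => i; rewrite forall_ord_recl /=.
  by apply: eq_forallb => j; rewrite !fconsS /bump /=.
have start_tail : [forall i : 'I_(size k'),
    (val (lift ord0 i) == 0%N) ==> (t <= (fcons x h (lift ord0 i)).2)%N].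
  by apply/forallP.
rewrite flags_tail pos_tail link_head links_tail start_tail /= /kk /=.
set a := [forall i, _]; set b := [forall i, _]; set c := [forall i, _]; set d := [forall i, _].
by case: a b c d (x.1 ==> _) (0 < x.2)%N (t <= x.2)%N => [] [] [] [] [] [] [].
Qed.

Lemma lhs_weight_fcons k0 k' x (h : {ffun 'I_(size k') -> bool * 'I_N}) :
  lhs_weight (k0 :: k') (fcons x h) =
  (if x.1 then ((N - x.2)%:R)^-1 else ((x.2)%:R ^+ k0)^-1) * lhs_weight k' h.
Proof.
rewrite /lhs_weight big_ord_recl fcons0; congr (_ * _).
by apply: eq_bigr => i _; rewrite fconsS.
Qed.

Lemma sum_lhs_weight k t : \sum_(g | lhs_range k t g) lhs_weight k g = lhs_tail M k t.
Proof.
elim: k t => [|k0 k' IH] t /=.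
  rewrite (eq_bigr (fun _ => 1)); last by move=> g _; rewrite /lhs_weight big_ord0.
  rewrite (eq_bigl xpredT); last by move=> g; rewrite /lhs_range /=; apply/and4P; split; apply/forallP => -[].
  by rewrite sumr_const card_ffun card_ord expn0.
rewrite sum_ffun_fcons.
pose w (x : bool * 'I_N) : rat := if x.1 then (N - x.2)%:R^-1 else (x.2%:R ^+ k0)^-1.
pose next (x : bool * 'I_N) : nat := if x.1 then val x.2 else (val x.2).+1.
transitivity (\sum_(x : bool * 'I_N)
   (if [&& x.1 ==> (k0 == 1%N), (0 < x.2)%N & (t <= x.2)%N] then w x * lhs_tail M k' (next x) else 0)).
  apply: eq_bigr => x _.
  case: ifP => head_ok.
    rewrite (eq_bigl (lhs_range k' (next x))); last first.
      by move=> h; rewrite lhs_range_fcons; case/and3P: head_ok => -> -> ->.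
    under eq_bigr => h _ do rewrite lhs_weight_fcons.
    by rewrite -big_distrr /= IH.
  rewrite big_pred0 // => h; rewrite lhs_range_fcons; apply/negbTE; apply: contraFN head_ok.
  by case/and4P => -> -> -> _.
transitivity (\sum_(b : bool) \sum_(n : 'I_N)
   (if [&& b ==> (k0 == 1%N), (0 < n)%N & (t <= n)%N] then w (b, n) * lhs_tail M k' (next (b, n)) else 0)).
  by rewrite pair_big; apply: eq_bigr => -[b n].
rewrite big_bool /= big_split /= addrC.
congr (_ + _); rewrite [RHS]big_mkcond /=; apply: eq_bigr => n _.
  by case: (0 < n)%N; case: (t <= n)%N.
by case: (k0 == 1%N); case: (0 < n)%N; case: (t <= n)%N.
Qed.

Lemma inS_flagsE k (g : {ffun 'I_(size k) -> bool * 'I_N}) :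
  ([set i | (g i).1] \subset ones k) && inS [set i | (g i).1] [ffun i => (g i).2] =
  lhs_range k 1 g.
Proof.
have flagsE : ([set i | (g i).1] \subset ones k) = [forall i, (g i).1 ==> (kk k i == 1%N)].
  apply/subsetP/forallP => [sub_ones i|flags1 i].
    by apply/implyP => gi1; have := sub_ones i; rewrite !inE; apply.
  by rewrite !inE => /(implyP (flags1 i)).
have linksE : [forall i : 'I_(size k), forall j : 'I_(size k), (val j == (val i).+1) ==>
     (if i \in [set i0 | (g i0).1] then ([ffun i => (g i).2] i <= [ffun i => (g i).2] j)%N
      else ([ffun i => (g i).2] i < [ffun i => (g i).2] j)%N)] =
   [forall i : 'I_(size k), forall j : 'I_(size k), (val j == (val i).+1) ==>
     (if (g i).1 then ((g i).2 <= (g j).2)%N else ((g i).2 < (g j).2)%N)].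
  by apply: eq_forallb => i; apply: eq_forallb => j; rewrite !ffunE inE.
rewrite /inS /lhs_range flagsE linksE.
have -> : [forall i, (0 < [ffun i => (g i).2] i)%N] = [forall i, (0 < (g i).2)%N].
  by apply: eq_forallb => i; rewrite ffunE.
case pos: [forall i, (0 < (g i).2)%N]; last by rewrite !andbF.
have -> : [forall i : 'I_(size k), (val i == 0%N) ==> (1 <= (g i).2)%N].
  by apply/forallP => i; apply/implyP => _; apply: (forallP pos).
by rewrite andbT andbC.
Qed.

Lemma zeta_diamond_flags k : zeta_diamond k N = \sum_(g | lhs_range k 1 g) lhs_weight k g.
Proof.
rewrite /zeta_diamond pair_big_dep /=.
rewrite (reindex (fun g : {ffun 'I_(size k) -> bool * 'I_N} =>
   ([set i | (g i).1], [ffun i => (g i).2]))) /=; last first.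
  exists (fun p : {set 'I_(size k)} * {ffun 'I_(size k) -> 'I_N} => [ffun i => (i \in p.1, p.2 i)]).
    by move=> g _; apply/ffunP => i; rewrite !ffunE inE; case: (g i).
  move=> [A n] _ /=; congr (_, _); first by apply/setP => i; rewrite inE ffunE.
  by apply/ffunP => i; rewrite !ffunE.
apply: eq_big => [g|g _]; first exact: inS_flagsE.
rewrite /lhs_weight [RHS](bigID (fun i => (g i).1)) /=.
congr (_ * _); apply: eq_big => i; rewrite ?inE ?ffunE //.
  by move=> ->.
by move/negbTE => ->.
Qed.
End LeftSide.

Section RightSide.
Variable M : nat.
Local Notation N := M.+1.

Definition dind_cons k0 k' (x : 'I_k0 + dind k') : dind (k0 :: k') :=
  match x with
  | inl j => @Tagged 'I_(size (k0 :: k')) ord0 (fun i0 : 'I_(size (k0 :: k')) => 'I_(kk (k0 :: k') i0)) j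
  | inr y => @Tagged 'I_(size (k0 :: k')) (lift ord0 (tag y))
                (fun i0 : 'I_(size (k0 :: k')) => 'I_(kk (k0 :: k') i0)) (tagged y)
  end.

Lemma dind_cons_inj k0 k' : injective (@dind_cons k0 k').
Proof.
move=> [j1|[i1 j1]] [j2|[i2 j2]] /= e.
- by rewrite (eq_from_Tagged e).
- by have := congr1 (fun d => val (tag d)) e.
- by have := congr1 (fun d => val (tag d)) e.
- have ei : i1 = i2.
    by apply: (@lift_inj _ ord0); have := congr1 tag e.
  subst i2; by rewrite (eq_from_Tagged e).
Qed.

Lemma dind_cons_bij k0 k' : bijective (@dind_cons k0 k').
Proof.
apply: inj_card_bij; first exact: dind_cons_inj.
rewrite -(card_codom (@dind_cons_inj k0 k')).
apply: subset_leq_card; apply/subsetP => -[i j] _.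
move: j; case: (unliftP ord0 i) => [i' ->|->] j.
  by apply/codomP; exists (inr (@Tagged _ i' (fun i0 => 'I_(kk k' i0)) j)).
by apply/codomP; exists (inl j).
Qed.

Definition bnth m (b : {ffun 'I_m -> 'I_N}) (j : nat) : nat :=
  if (insub j : option 'I_m) is Some j' then val (b j') else 0%N.

Lemma bnth_fcons0 m a (c : {ffun 'I_m -> 'I_N}) : bnth (fcons a c) 0 = a.
Proof.
have e : insub 0%N = Some (@ord0 m) := valK (@ord0 m).
by rewrite /bnth e fcons0.
Qed.

Lemma bnth_fconsS m a (c : {ffun 'I_m -> 'I_N}) j : bnth (fcons a c) j.+1 = bnth c j.
Proof.
rewrite /bnth.
case: (ltnP j m) => hj.
  have e1 : insub j.+1 = Some (lift ord0 (Ordinal hj)) := valK (lift ord0 (Ordinal hj)).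
  have e2 : insub j = Some (Ordinal hj) := valK (Ordinal hj).
  by rewrite e1 e2 fconsS.
rewrite !insubF //; by rewrite ?ltnS ltnNge hj.
Qed.

Definition nondecr m (b : {ffun 'I_m -> 'I_N}) : bool :=
  [forall j : 'I_m, ((val j).+1 < m)%N ==> (bnth b j <= bnth b (val j).+1)%N].

Lemma nondecr_fcons m a (c : {ffun 'I_m.+1 -> 'I_N}) :
  nondecr (fcons a c) = (a <= bnth c 0)%N && nondecr c.
Proof.
rewrite /nondecr forall_ord_recl /= bnth_fcons0 bnth_fconsS; congr (_ && _).
by apply: eq_forallb => j; rewrite /bump /= !bnth_fconsS.
Qed.

Lemma sum_nondecr_Xiter m (w : nat -> rat) (P : pred nat) (G : nat -> rat) :
  (forall a, P a -> (0 < a)%N) ->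
  \sum_(b : {ffun 'I_m.+1 -> 'I_N} | P (bnth b 0) && nondecr b)
     w (bnth b 0) * (\prod_(1 <= j < m.+1) (bnth b j)%:R)^-1 * G (bnth b m) =
  \sum_(a < N | P a) w a * Xiter M m G a.
Proof.
elim: m w P G => [|m IH] w P G P_gt0.
  rewrite sum_ffun_fcons [RHS]big_mkcond /=; apply: eq_bigr => a _.
  rewrite (eq_bigl (fun _ => P a)); last first.
    by move=> c; rewrite bnth_fcons0 /nondecr; apply/andb_idr => _; apply/forallP => -[[|j] ?].
  under eq_bigr do rewrite bnth_fcons0 big_geq // invr1 mulr1.
  case: (P a); last by rewrite big_pred0.
  by rewrite (eq_bigl xpredT) // sumr_const card_ffun (card_ord 0) expn0.
rewrite sum_ffun_fcons [RHS]big_mkcond /=; apply: eq_bigr => a _.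
rewrite (eq_bigl (fun c => P a && ((a <= bnth c 0)%N && nondecr c))); last first.
  by move=> c; rewrite bnth_fcons0 nondecr_fcons.
under eq_bigr => c _.
  rewrite bnth_fcons0 bnth_fconsS big_add1 /=.
  under eq_bigr => j _ do rewrite bnth_fconsS.
  by rewrite big_ltn // invfM mulrA -(mulrA (w a)) -mulrA; over.
case Pa: (P a); last by rewrite big_pred0.
have a_gt0 := P_gt0 _ Pa.
rewrite -big_distrr /= (IH (fun v => v%:R^-1) (fun v => (a <= v)%N)); last first.
  by move=> v; apply: leq_trans.
congr (_ * _); rewrite /Xsum; apply: eq_big => [v|v _]; last by rewrite mulrC.
by case: (leqP a v) => le_av; rewrite ?andbT ?andbF ?(leq_trans a_gt0 le_av).
Qed.

Definition next_bound k0 (b : {ffun 'I_k0 -> 'I_N}) : nat :=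
  if k0 == 1%N then bnth b k0.-1 else (bnth b k0.-1).+1.

Definition rhs_range_from k t (n : dvars k N) : bool :=
  rhs_range n && [forall i : 'I_(size k), (val i == 0%N) ==> (t <= nget n i 0)%N].

Definition rhs_weight k (n : dvars k N) : rat :=
  \prod_(i : 'I_(size k)) (((N - nget n i 0)%:R * \prod_(1 <= j < kk k i) (nget n i j)%:R)^-1).

Definition block_weight k0 (b : {ffun 'I_k0 -> 'I_N}) : rat :=
  ((N - bnth b 0)%:R * \prod_(1 <= j < k0) (bnth b j)%:R)^-1.
Arguments rhs_range_from : clear implicits.
Arguments rhs_weight : clear implicits.

Definition rhs_range_of k (f : 'I_(size k) -> nat -> nat) : bool :=
  [forall i, (0 < f i 0)%N &&
     [forall j : 'I_(kk k i), ((val j).+1 < kk k i)%N ==> (f i j <= f i (val j).+1)%N]] &&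
  [forall i : 'I_(size k), forall i' : 'I_(size k), (val i' == (val i).+1) ==>
     ((if kk k i == 1%N then f i (kk k i).-1 else (f i (kk k i).-1).+1) <= f i' 0)%N].
Arguments rhs_range_of : clear implicits.

Lemma rhs_rangeE k (n : dvars k N) : rhs_range n = rhs_range_of k (nget n).
Proof.
rewrite /rhs_range /rhs_range_of; congr (_ && _).
apply: eq_forallb => i; apply: eq_forallb => i'; rewrite inE.
by case: (kk k i == 1%N).
Qed.

Lemma eq_rhs_rangeF k f g : (forall i j, f i j = g i j) -> rhs_range_of k f = rhs_range_of k g.
Proof.
move=> e; rewrite /rhs_range_of; congr (_ && _).
  by apply: eq_forallb => i; rewrite !e; congr (_ && _); apply: eq_forallb => j; rewrite !e.
by apply: eq_forallb => i; apply: eq_forallb => i'; rewrite !e.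
Qed.

Lemma rhs_rangeF_cons k0 k' (f : 'I_(size (k0 :: k')) -> nat -> nat) :
  rhs_range_of (k0 :: k') f =
  [&& (0 < f ord0 0)%N,
      [forall j : 'I_k0, ((val j).+1 < k0)%N ==> (f ord0 j <= f ord0 (val j).+1)%N],
      rhs_range_of k' (fun i => f (lift ord0 i)) &
      [forall i' : 'I_(size k'), (val i' == 0%N) ==>
         ((if k0 == 1%N then f ord0 k0.-1 else (f ord0 k0.-1).+1) <= f (lift ord0 i') 0)%N]].
Proof.
rewrite /rhs_range_of !forall_ord_recl -/(size k') /=.
under [X in _ && (_ && X)]eq_forallb => i do rewrite forall_ord_recl /=.
have taut : forall a b c d e : bool, [&& a && b && c, d & e] = [&& a, b, c && e & d].
  by do 5!case.
exact: taut.
Qed.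

Section Glue.
Variables (k0 : nat) (k' : seq nat) (psi : dind (k0 :: k') -> 'I_k0 + dind k').
Hypothesis dind_consK : cancel (@dind_cons k0 k') psi.

Lemma nget_glue0 (b : {ffun 'I_k0 -> 'I_N}) (h : dvars k' N) j :
  nget (glue psi b h : dvars (k0 :: k') N) ord0 j = bnth b j.
Proof. by rewrite /nget /bnth; case: (insub j) => [j'|] //; rewrite -(glueL dind_consK b h j'). Qed.

Lemma nget_glueS (b : {ffun 'I_k0 -> 'I_N}) (h : dvars k' N) i j :
  nget (glue psi b h : dvars (k0 :: k') N) (lift ord0 i) j = nget h i j.
Proof.
rewrite /nget; case: (insub j) => [j'|] //.
by rewrite -(glueR dind_consK b h (@Tagged _ i (fun i0 => 'I_(kk k' i0)) j')).
Qed.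

Lemma rhs_range_from_glue t (b : {ffun 'I_k0 -> 'I_N}) (h : dvars k' N) :
  rhs_range_from (k0 :: k') t (glue psi b h) =
  [&& (0 < bnth b 0)%N, (t <= bnth b 0)%N, nondecr b & rhs_range_from k' (next_bound b) h].
Proof.
rewrite /rhs_range_from !rhs_rangeE rhs_rangeF_cons forall_ord_recl -/(size k') /=.
rewrite (@eq_rhs_rangeF k' _ (nget h)); last by move=> i j; rewrite nget_glueS.
rewrite !nget_glue0.
rewrite (@eq_forallb _ _ (fun j : 'I_k0 => ((val j).+1 < k0)%N ==> (bnth b j <= bnth b (val j).+1)%N));
  last by move=> j; rewrite !nget_glue0.
rewrite -/(nondecr b).
under eq_forallb => i do rewrite nget_glueS.
rewrite (_ : [forall i : 'I_(size k'), true] = true); last by apply/forallP.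
rewrite /next_bound.
have taut : forall a b c d e : bool, [&& [&& a, b, c & d], e & true] = [&& a, e, b, c & d].
  by do 5!case.
exact: taut.
Qed.

Lemma rhs_weight_glue (b : {ffun 'I_k0 -> 'I_N}) (h : dvars k' N) :
  rhs_weight (k0 :: k') (glue psi b h) = block_weight b * rhs_weight k' h.
Proof.
rewrite /rhs_weight /block_weight big_ord_recl nget_glue0 -/(size k') /=.
congr (_ * _).
  by congr ((_ * _)^-1); apply: eq_bigr => j _; rewrite nget_glue0.
apply: eq_bigr => i _; rewrite nget_glueS.
by congr ((_ * _)^-1); apply: eq_bigr => j _; rewrite nget_glueS.
Qed.
End Glue.

Lemma sum_rhs_weight k t : all (fun x => 0 < x)%N k ->
  \sum_(n | rhs_range_from k t n) rhs_weight k n = rhs_tail M k t.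
Proof.
elim: k t => [|k0 k' IH] t /=.
  move=> _; rewrite (eq_bigr (fun _ => 1)); last by move=> n _; rewrite /rhs_weight big_ord0.
  rewrite (eq_bigl xpredT); last first.
    by move=> n; rewrite /rhs_range_from /rhs_range; apply/andP; split; [apply/andP; split|]; apply/forallP => -[].
  rewrite sumr_const card_ffun.
  by have -> : #|{: dind [::]}| = 0%N by apply: eq_card0 => -[[]].
case/andP=> k0_gt0 pos_k'; have [psi dind_consK psiK] := dind_cons_bij k0 k'.
rewrite (sum_ffun_glue dind_consK psiK).
case: k0 k0_gt0 psi dind_consK psiK => // m _ psi dind_consK psiK.
pose G v := rhs_tail M k' (if m.+1 == 1%N then v else v.+1).
transitivity (\sum_(b : {ffun 'I_m.+1 -> 'I_N} |
                   ((0 < bnth b 0) && (t <= bnth b 0))%N && nondecr b)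
   (N - bnth b 0)%:R^-1 * (\prod_(1 <= j < m.+1) (bnth b j)%:R)^-1 * G (bnth b m)).
  rewrite [RHS]big_mkcond; apply: eq_bigr => b _.
  case: ifP => rng_b; last first.
    by rewrite big_pred0 // => h; rewrite (rhs_range_from_glue dind_consK) !andbA rng_b.
  rewrite (eq_bigl (rhs_range_from k' (next_bound b))); last first.
    by move=> h; rewrite (rhs_range_from_glue dind_consK) !andbA rng_b.
  under eq_bigr => h _ do rewrite (rhs_weight_glue dind_consK).
  by rewrite -big_distrr /= IH // /block_weight invfM /next_bound.
rewrite (@sum_nondecr_Xiter m (fun a => (N - a)%:R^-1) (fun a => (0 < a)%N && (t <= a)%N)).
  by rewrite /Ysum; apply: eq_bigr => a _; rewrite mulrC.
by move=> a /andP[].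
Qed.

Lemma rhs_sumE k : rhs_sum k N = \sum_(n | rhs_range_from k 1 n) rhs_weight k n.
Proof.
apply: eq_bigl => n; rewrite /rhs_range_from.
case rng: (rhs_range n) => //=; symmetry; apply/forallP => i; apply/implyP => _.
by case/andP: rng => /forallP /(_ i) /andP[].
Qed.
End RightSide.

Theorem mainTheorem13 (N : nat) (k : seq nat) :
  (0 < N)%N -> admissible k -> zeta_diamond k N = rhs_sum k N.
Proof.
case: N => // M _; case: k => // k0 k' /and3P[_ pos last_ge2].
have adm : tail_admissible (k0 :: k').
  by rewrite tail_admissibleE pos /= neq_ltn last_ge2 orbT.
by rewrite zeta_diamond_flags sum_lhs_weight lhs_tail_rhs_tail // rhs_sumE sum_rhs_weight.
Qed.
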